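(* Let $w,\pi,u\in S_n$ with $u\leq_L w$ and $u\leq_R\pi$. If \[ \ell(wu^{-1})+\ell(u)+\ell(u^{-1}\pi)>\ell(wu^{-1}\pi), \] then there exists $u'\in S_n$ with $u'>_B u$ in strong Bruhat order such that $u'\leq_L w$ and $u'\leq_R\pi$.
   Context: $S_n$ is the symmetric group with product $(uv)(i)=u(v(i))$. The length $\ell(w)$ is the number of inversions $\{(i,j):i<j,\ w(i)>w(j)\}$. Left weak order: $v\leq_L w$ iff $w=zv$ with $\ell(w)=\ell(z)+\ell(v)$; right weak order: $v\leq_R w$ iff $w=vz$ with $\ell(w)=\ell(v)+\ell(z)$. Strong Bruhat order $\leq_B$ is the partial order generated by the relations $v<_B vt$ whenever $t$ is a transposition and $\ell(vt)>\ell(v)$. *)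

From mathcomp Require Import all_boot all_order all_fingroup.
From Stdlib Require Import Relations.
Set Implicit Arguments. Unset Strict Implicit. Unset Printing Implicit Defensive.

(* S_n = permutations of 'I_n.  The paper's product is (uv)(i) = u(v(i));
   mathcomp's group product is (s * t) x = t (s x), so we define pmul
   explicitly with the paper's convention. *)
Definition pmul n (u v : {perm 'I_n}) : {perm 'I_n} := (v * u)%g.
Definition pinv n (u : {perm 'I_n}) : {perm 'I_n} := (u^-1)%g.

Lemma pmulE n (u v : {perm 'I_n}) i : pmul u v i = u (v i).
Proof. by rewrite /pmul permM. Qed.

Definition len n (w : {perm 'I_n}) : nat :=
  #|[set p : 'I_n * 'I_n | (p.1 < p.2) && (w p.2 < w p.1)]|.

Definition leL n (v w : {perm 'I_n}) : Prop :=
  exists z : {perm 'I_n}, w = pmul z v /\ len w = len z + len v.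

Definition leR n (v w : {perm 'I_n}) : Prop :=
  exists z : {perm 'I_n}, w = pmul v z /\ len w = len v + len z.

Definition is_transposition n (t : {perm 'I_n}) : Prop :=
  exists i j : 'I_n, i != j /\ t = tperm i j.

Definition bruhat_step n (v w : {perm 'I_n}) : Prop :=
  exists t, is_transposition t /\ w = pmul v t /\ len v < len w.

Definition bruhat_le n : relation {perm 'I_n} := clos_refl_trans _ (@bruhat_step n).

Definition bruhat_lt n (v w : {perm 'I_n}) : Prop := bruhat_le v w /\ v <> w.

(* Weak orders are inclusions of inversion sets: u <=_L w iff Inv(u) is contained in
   Inv(w), and u <=_R pi iff Inv(u^-1) is contained in Inv(pi^-1).  The length
   hypothesis rules out u = w, so w u^-1 <> 1 has an adjacent descent (c, c+1).  With
   s = (c c+1), s u covers u in Bruhat order and s u <=_L w.  If s u <=_R pi we are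
   done.  Otherwise c precedes c+1 in pi, and the pair (s u, s pi) satisfies all the
   hypotheses (w u^-1 pi and u^-1 pi are unchanged) with s u longer than u, so by
   induction on l(w) - l(u) some u'' >_B s u lies below w and s pi.  Either u'' <=_R pi
   already, or s u'' is the required element, because x |-> min(x, s x) is monotone
   for the Bruhat order (the lifting property). *)

From mathcomp Require Import all_boot all_order all_fingroup.
From mathcomp Require Import zify.
From Stdlib Require Import Relations.
Set Implicit Arguments. Unset Strict Implicit. Unset Printing Implicit Defensive.

Import GroupScope.

Lemma val_neq n (i j : 'I_n) : i <> j -> i != j :> nat.
Proof. by move/eqP. Qed.

Lemma ord_ltn_neq n (i j : 'I_n) : i < j -> i != j.
Proof. by move=> /ltn_eqF/negbT. Qed.

Lemma ord_gtn_neq n (i j : 'I_n) : i < j -> j != i.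
Proof. by move=> /gtn_eqF/negbT. Qed.

Lemma perm_val_neq n (x : {perm 'I_n}) (i j : 'I_n) : i != j -> x i != x j :> nat.
Proof. by rewrite val_eqE (inj_eq perm_inj). Qed.

Lemma perm_ltNge n (x : {perm 'I_n}) (i j : 'I_n) : i != j -> (x j < x i) = ~~ (x i < x j).
Proof. by move=> /(perm_val_neq x); rewrite neq_ltn; case: ltngtP. Qed.

Lemma mulg_tpermE n (x : {perm 'I_n}) a b : x * tperm a b = tperm (x^-1 a) (x^-1 b) * x.
Proof. by rewrite -tpermJ /conjg invgK -!mulgA mulVg mulg1. Qed.

Lemma tperm_flip n (i j p q : 'I_n) : i < j -> p < q -> tperm i j q < tperm i j p ->
  [\/ p = i /\ q = j, p = i /\ i < q < j | q = j /\ i < p < j].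
Proof.
move=> ij; case: (tpermP i j p) => [->|->|/val_neq pi /val_neq pj];
  case: (tpermP i j q) => [->|->|/val_neq qi /val_neq qj] pq qp;
  by [ constructor 1 | constructor 2; split=> //; lia
     | constructor 3; split=> //; lia | exfalso; lia ].
Qed.

Lemma perm_incr_eq1 n (z : {perm 'I_n}) : {homo z : i j / i < j} -> z = 1.
Proof.
move=> z_incr.
have sorted_ord : sorted (relpre val ltn) (enum 'I_n).
  by rewrite -sorted_map val_enum_ord iota_ltn_sorted.
have zE : map z (enum 'I_n) = enum 'I_n.
  apply: (irr_sorted_eq (leT := relpre val ltn)) => //.
  - by move=> a b d /=; apply: ltn_trans.
  - by move=> a /=; rewrite ltnn.
  - by rewrite sorted_map; apply: sub_sorted sorted_ord => a b /z_incr.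
  - by move=> a; rewrite mem_enum; apply/mapP; exists (z^-1 a); rewrite ?mem_enum ?permKV.
apply/permP => i; rewrite perm1.
by have := congr1 (nth i ^~ i) zE; rewrite (nth_map i) ?size_enum_ord // nth_ord_enum.
Qed.

Lemma exists_adj_descent n (z : {perm 'I_n}) : z != 1 ->
  exists c c1 : 'I_n, c1 = c.+1 :> nat /\ z c1 < z c.
Proof.
case: (boolP [exists c : 'I_n, exists c1 : 'I_n, (c1 == c.+1 :> nat) && (z c1 < z c)]).
  by move=> /existsP[c /existsP[c1 /andP[/eqP c1E desc]]] _; exists c, c1.
rewrite negb_exists => /forallP no_desc /eqP[]; apply: perm_incr_eq1.
have z_adj (i j : 'I_n) : j = i.+1 :> nat -> z i < z j.
  move=> ji; have := no_desc i; rewrite negb_exists => /forallP/(_ j).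
  case/nandP => [/eqP/(_ ji)[] | ]; rewrite -perm_ltNge ?negbK //.
  by apply/eqP => eji; rewrite eji in ji; lia.
suff z_gap d (i j : 'I_n) : j = i + d.+1 :> nat -> z i < z j.
  by move=> i j ij; apply: (z_gap (j - i.+1)); lia.
elim: d i j => [|d IH] i j ji; first by apply: z_adj; rewrite ji addn1.
have lt_k : i + d.+1 < n by have := ltn_ord j; lia.
by apply: ltn_trans (IH i (Ordinal lt_k) erefl) (z_adj _ _ _) => /=; rewrite ji addnS.
Qed.

Section Inversions.
Variable n : nat.
Implicit Types (v w x z : {perm 'I_n}) (i j : 'I_n).

Definition inversions x : {set 'I_n * 'I_n} :=
  [set p : 'I_n * 'I_n | (p.1 < p.2) && (x p.2 < x p.1)].

Lemma lenE x : len x = #|inversions x|.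
Proof. by []. Qed.

Lemma subset_inversionsP v w :
  reflect (forall i j, i < j -> v j < v i -> w j < w i)
          (inversions v \subset inversions w).
Proof.
apply: (iffP subsetP) => [sub i j ij vji | sub [i j]].
  by have := sub (i, j); rewrite !inE /= ij vji => /(_ isT).
by rewrite !inE /= => /andP[ij vji]; rewrite ij sub.
Qed.

Lemma len_inv x : len x^-1 = len x.
Proof.
have f_inj : injective (fun p : 'I_n * 'I_n => (x p.2, x p.1)).
  by move=> [a b] [a' b'] [/perm_inj -> /perm_inj ->].
rewrite !lenE -(card_preimset _ f_inj); apply: eq_card => -[a b].
by rewrite !inE /= !permK andbC.
Qed.

(* An inversion of [z] at the values [(v a, v b)] is an inversion of exactly one
   of [v] and [v * z] at [(a, b)]. *)
Lemma len_inversions_mul v z :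
  len z = #|inversions v :\: inversions (v * z)| + #|inversions (v * z) :\: inversions v|.
Proof.
have vv_inj : injective (fun p : 'I_n * 'I_n => (v p.1, v p.2)).
  by move=> [a b] [a' b'] [/perm_inj -> /perm_inj ->].
have swap_inj : injective (fun p : 'I_n * 'I_n => (p.2, p.1)) by move=> [a b] [a' b'] [-> ->].
rewrite lenE -(card_preimset _ vv_inj) -(cardsID [set p : 'I_n * 'I_n | p.1 < p.2]) [RHS]addnC.
congr (_ + _); [|rewrite -(card_preimset _ swap_inj)];
  apply: eq_card => -[a b]; rewrite !inE /= !permM;
  (case: (eqVneq a b) => [->|ab]; first by rewrite !ltnn !andbF);
  have vab : v a != v b by rewrite (inj_eq perm_inj).
all: have : a != b :> nat := ab.
all: by have := perm_val_neq v ab; have := perm_val_neq z vab; lia.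
Qed.

Lemma len_mul v z :
  len (v * z) + 2 * #|inversions v :\: inversions (v * z)| = len v + len z.
Proof.
rewrite (len_inversions_mul v z) !lenE.
rewrite -(cardsID (inversions v) (inversions (v * z))).
rewrite -(cardsID (inversions (v * z)) (inversions v)) setIC.
lia.
Qed.

Lemma leLP v w : leL v w <-> inversions v \subset inversions w.
Proof.
rewrite -setD_eq0 -cards_eq0; split => [[z [-> lenE']] | /eqP D0].
  by have := len_mul v z; rewrite /pmul in lenE' *; lia.
exists (v^-1 * w); rewrite /pmul mulKVg; split => //.
by have := len_mul v (v^-1 * w); rewrite mulKVg D0; lia.
Qed.

Lemma leRP v w : leR v w <-> inversions v^-1 \subset inversions w^-1.
Proof.
rewrite -leLP; split => [[z [-> lenE']] | [z [wE lenE']]]; exists z^-1.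
  by rewrite /pmul !len_inv invMg lenE' addnC.
move: lenE'; rewrite !len_inv addnC => <-.
by rewrite -[w]invgK wE /pmul invMg invgK.
Qed.

(* The involution [g] maps the inversions of [x] into those of [tperm i j * x],
   missing [(i, j)]. *)
Lemma len_lt_tpermM x i j : i < j -> x i < x j -> len x < len (tperm i j * x).
Proof.
move=> ij xij; set t := tperm i j.
pose g (p : 'I_n * 'I_n) := if t p.1 < t p.2 then (t p.1, t p.2) else p.
have gK : {in inversions x, cancel g g}.
  move=> [a b]; rewrite inE /= => /andP[ab _]; rewrite /g /=.
  by case tab: (t a < t b) => /=; rewrite ?tab // !tpermK ab.
have g_inv : {in inversions x, forall p, g p \in inversions (t * x)}.
  move=> [a b]; rewrite inE /g /= => /andP[ab xba].
  case: ifP => [tab | /negbT tba]; rewrite inE /= !permM; first by rewrite tab !tpermK.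
  rewrite ab /=.
  have := perm_val_neq t (ord_ltn_neq ab); move: tba ab xba ij xij.
  by case: (tpermP i j a) => [->|->|/val_neq ai /val_neq aj];
    case: (tpermP i j b) => [->|->|/val_neq bi /val_neq bj]; lia.
have ij_new : (i, j) \in inversions (t * x) :\: g @: inversions x.
  rewrite in_setD andbC inE /= ij !permM tpermL tpermR xij /=.
  apply/negP => /imsetP[q q_inv qE]; move: q_inv (gK q q_inv).
  rewrite -qE /g /= tpermL tpermR ltnNge (ltnW ij) /= => + qij.
  by rewrite -qij inE /= ij ltnNge (ltnW xij).
rewrite !lenE -(card_in_imset (can_in_inj gK)); apply: proper_card; apply/properP; split.
  by apply/subsetP => _ /imsetP[p p_inv ->]; exact: g_inv.
by exists (i, j); move: ij_new; rewrite inE => /andP[].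
Qed.

Lemma len_tpermM x i j : i < j -> (len x < len (tperm i j * x)) = (x i < x j).
Proof.
move=> ij; apply/idP/idP => [|/(len_lt_tpermM ij) //]; apply: contraLR => xij.
have xji : x j < x i by have := perm_val_neq x (ord_ltn_neq ij); lia.
have := len_lt_tpermM (x := tperm i j * x) ij.
by rewrite !permM tpermL tpermR mulgA tperm2 mul1g -leqNgt => /(_ xji)/ltnW.
Qed.

End Inversions.

Section BruhatSteps.
Variable n : nat.
Implicit Types (x y : {perm 'I_n}) (i j : 'I_n).

Lemma bruhat_stepP x y :
  bruhat_step x y <-> exists i j, [/\ i < j, x i < x j & y = tperm i j * x].
Proof.
split => [[_ [[i [j [ij ->]]] [yE lenxy]]] | [i [j [ij xij ->]]]].
  rewrite /pmul in yE; subst y.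
  case: (ltngtP i j) => [lt | gt | /val_inj eq]; last by rewrite eq eqxx in ij.
    by exists i, j; rewrite -len_tpermM.
  by exists j, i; rewrite tpermC -len_tpermM // tpermC.
exists (tperm i j); split; first by exists i, j; rewrite ord_ltn_neq.
by rewrite len_tpermM.
Qed.

Lemma bruhat_le_len x y : bruhat_le x y -> len x <= len y.
Proof.
elim=> [a b [_ [_ [_ /ltnW //]]] | // | a b d _ lab _ lbd].
exact: leq_trans lab lbd.
Qed.

Lemma bruhat_le_tpermM x i j : i < j -> x i < x j -> bruhat_le x (tperm i j * x).
Proof. by move=> ij xij; apply: rt_step; apply/bruhat_stepP; exists i, j. Qed.

Lemma bruhat_step_mulg_tperm x (a b : 'I_n) :
  a < b -> x^-1 a < x^-1 b -> bruhat_step x (x * tperm a b).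
Proof.
by move=> ab xab; apply/bruhat_stepP; exists (x^-1 a), (x^-1 b); rewrite !permKV mulg_tpermE.
Qed.

Lemma bruhat_step_lt x y : bruhat_step x y -> bruhat_lt x y.
Proof.
move=> xy; split; first exact: rt_step.
by case: xy => _ [_ [_ lenxy]] exy; rewrite exy ltnn in lenxy.
Qed.

(* The two transpositions share an endpoint, so their product is a 3-cycle, reached
   from [x] by two Bruhat steps. *)
Lemma bruhat_le_tperm_reversed x i j (p q : 'I_n) : i < j -> x i < x j ->
  p < q -> x q = (x p).+1 :> nat -> tperm i j q < tperm i j p ->
  bruhat_le x (tperm i j * tperm p q * x).
Proof.
move=> ij xij pq xpq tqp.
case: (tperm_flip ij pq tqp) => [[-> ->] | [pE /andP[iq qj]] | [qE /andP[ip pj]]];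
  [| subst p | subst q].
- by rewrite tperm2 mul1g; apply: rt_refl.
- have -> : tperm i j * tperm i q = tperm i q * tperm q j.
    by rewrite conjgC tpermJ tpermL (tpermD (ord_ltn_neq ij) (ord_ltn_neq qj)).
  have xqj : x q < x j by have := perm_val_neq x (ord_ltn_neq qj); lia.
  rewrite -mulgA; apply: rt_trans (bruhat_le_tpermM qj xqj) (bruhat_le_tpermM iq _).
  by rewrite !permM tpermL (tpermD (ord_gtn_neq iq) (ord_gtn_neq ij)).
- have -> : tperm i j * tperm p j = tperm p j * tperm i p.
    by rewrite conjgC tpermJ tpermR (tpermD (ord_gtn_neq ip) (ord_gtn_neq ij)).
  have xip : x i < x p by have := perm_val_neq x (ord_ltn_neq ip); lia.
  rewrite -mulgA; apply: rt_trans (bruhat_le_tpermM ip xip) (bruhat_le_tpermM pj _).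
  by rewrite !permM tpermR (tpermD (ord_ltn_neq ij) (ord_ltn_neq pj)).
Qed.

End BruhatSteps.

(* MathComp's product applies its left factor first: [x * s] exchanges the values
   [c] and [c1] of [x] (the paper's [s x]), while [s * x] exchanges its positions. *)
Section AdjacentTransposition.
Variables (n : nat) (c c1 : 'I_n).
Hypothesis c1E : c1 = c.+1 :> nat.
Local Notation s := (tperm c c1).
Implicit Types (a b x y : {perm 'I_n}) (i j : 'I_n).

Lemma ltn_tperm_adj i j : ~~ ((i == c) && (j == c1)) -> ~~ ((i == c1) && (j == c)) ->
  (s i < s j) = (i < j).
Proof.
case: (tpermP c c1 i) => [->|->|/val_neq ic /val_neq ic1];
  case: (tpermP c c1 j) => [->|->|/val_neq jc /val_neq jc1];
  rewrite ?eqxx //= => _ _; lia.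
Qed.

Lemma sub_inversions_mulg_tperm x y : inversions x \subset inversions y ->
  (x^-1 c < x^-1 c1 -> y (x^-1 c1) < y (x^-1 c)) ->
  inversions (x * s) \subset inversions y.
Proof.
move=> /subset_inversionsP sub new; apply/subset_inversionsP => i j ij; rewrite !permM.
case: (boolP ((x i == c) && (x j == c1))) => [/andP[/eqP xi /eqP xj] _ | ne_cc1].
  by move: new; rewrite -xi -xj !permK; apply.
case: (boolP ((x i == c1) && (x j == c))) => [/andP[/eqP -> /eqP ->] | ne_c1c].
  by rewrite tpermL tpermR c1E ltnNge leqnSn.
by rewrite ltn_tperm_adj ?(andbC (x j == _)) //; apply: sub.
Qed.

Lemma sub_inversions_tperm_mul2 a b : inversions a \subset inversions b ->
  (a c < a c1) = (b c < b c1) -> inversions (s * a) \subset inversions (s * b).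
Proof.
move=> /subset_inversionsP sub same; apply/subset_inversionsP => i j; rewrite !permM.
have := sub (s i) (s j); move: same.
case: (tpermP c c1 i) => [->|->|/val_neq ic /val_neq ic1];
  case: (tpermP c c1 j) => [->|->|/val_neq jc /val_neq jc1]; lia.
Qed.

Lemma sub_inversions_tperm_mull a b : inversions a \subset inversions b ->
  a c < a c1 -> b c1 < b c -> inversions (s * a) \subset inversions b.
Proof.
move=> /subset_inversionsP sub ac bc; apply/subset_inversionsP => i j; rewrite !permM.
have := sub i j; have := sub c1 j; have := sub i c.
case: (tpermP c c1 i) => [->|->|/val_neq ic /val_neq ic1];
  case: (tpermP c c1 j) => [->|->|/val_neq jc /val_neq jc1]; lia.
Qed.

Lemma sub_inversions_tperm_mulr a b : inversions a \subset inversions (s * b) ->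
  a c < a c1 -> b c < b c1 -> inversions a \subset inversions b.
Proof.
move=> /subset_inversionsP sub ac bc; apply/subset_inversionsP => i j.
have := sub i j; have := sub c1 j; have := sub i c; rewrite !permM tpermL tpermR.
case: (tpermP c c1 i) => [->|->|/val_neq ic /val_neq ic1];
  case: (tpermP c c1 j) => [->|->|/val_neq jc /val_neq jc1]; lia.
Qed.

(* The Bruhat-smaller of [x] and [x * s]. *)
Definition min_tperm x := if x^-1 c < x^-1 c1 then x else x * s.

Lemma c_neq_c1 : c != c1.
Proof. by apply/eqP => cc1; move: c1E; rewrite -cc1; lia. Qed.

Lemma invg_neq_adj x : x^-1 c != x^-1 c1 :> nat.
Proof. exact: perm_val_neq c_neq_c1. Qed.

Lemma min_tperm_mulg x : min_tperm (x * s) = min_tperm x.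
Proof.
rewrite /min_tperm invMg tpermV !permM tpermL tpermR -[x * s * s]mulgA tperm2 mulg1.
by have := invg_neq_adj x; case: ltngtP.
Qed.

Lemma bruhat_le_min_tperm_step x i j : i < j -> x i < x j ->
  bruhat_le (min_tperm x) (min_tperm (tperm i j * x)).
Proof.
move=> ij xij.
have yinv v : (tperm i j * x)^-1 v = tperm i j (x^-1 v) by rewrite invMg tpermV permM.
have P01 : x^-1 c != x^-1 c1 by rewrite (inj_eq perm_inj) c_neq_c1.
have c_lt_c1 : c < c1 by rewrite c1E.
rewrite /min_tperm !yinv; case: ifP => b0; case: ifP => b1.
- exact: bruhat_le_tpermM.
- have -> : tperm i j * x * s = tperm i j * tperm (x^-1 c) (x^-1 c1) * x.
    by rewrite -mulgA mulg_tpermE mulgA.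
  apply: bruhat_le_tperm_reversed => //; first by rewrite !permKV c1E.
  by rewrite (perm_ltNge _ P01) b1.
- apply: rt_trans (bruhat_le_tpermM ij xij); apply: rt_step.
  have := bruhat_step_mulg_tperm (x := x * s) c_lt_c1.
  rewrite invMg tpermV !permM tpermL tpermR (perm_ltNge _ c_neq_c1) b0.
  by rewrite -[x * s * s]mulgA tperm2 mulg1; apply.
- have -> : tperm i j * x * s = tperm i j * (x * s) by rewrite mulgA.
  apply: (bruhat_le_tpermM ij); rewrite !permM ltn_tperm_adj //.
  + by apply/negP => /andP[/eqP xi /eqP xj]; move: b0; rewrite -xi -xj !permK ij.
  + by apply/negP => /andP[/eqP xi /eqP xj]; move: xij; rewrite xi xj c1E ltnNge leqnSn.
Qed.

Lemma bruhat_le_min_tperm x y : bruhat_le x y -> bruhat_le (min_tperm x) (min_tperm y).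
Proof.
elim=> [a b /bruhat_stepP[i [j [ij aij ->]]] | a | a b d _ lab _ lbd].
- exact: bruhat_le_min_tperm_step.
- exact: rt_refl.
- exact: rt_trans lab lbd.
Qed.

Lemma exists_bruhat_gt_tperm (w p u u2 : {perm 'I_n}) :
  u^-1 c < u^-1 c1 -> p^-1 c < p^-1 c1 -> bruhat_lt (u * s) u2 ->
  inversions u2 \subset inversions w -> inversions u2^-1 \subset inversions (p * s)^-1 ->
  exists u', [/\ bruhat_lt u u', inversions u' \subset inversions w
               & inversions u'^-1 \subset inversions p^-1].
Proof.
move=> uc pc [le_u1u2 ne_u1u2] Lu2; rewrite invMg tpermV => Ru2.
case: (ltnP (u2^-1 c1) (u2^-1 c)) => u2c.
  have u2c' : (u2^-1 c < u2^-1 c1) = false by rewrite ltnNge ltnW.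
  exists (u2 * s); split.
  - split; last by move=> u_u2s; apply: ne_u1u2; rewrite u_u2s -[u2 * s * s]mulgA tperm2 mulg1.
    by have := bruhat_le_min_tperm le_u1u2; rewrite min_tperm_mulg /min_tperm uc u2c'.
  - by apply: sub_inversions_mulg_tperm; rewrite ?u2c'.
  - rewrite invMg tpermV -[p^-1](tpermKg c c1); apply: sub_inversions_tperm_mul2 => //.
    by rewrite u2c' !permM tpermL tpermR ltnNge ltnW.
have lt_u_u1 : bruhat_step u (u * s) by apply: bruhat_step_mulg_tperm; rewrite ?c1E.
exists u2; split => //; last first.
  by apply: sub_inversions_tperm_mulr Ru2 _ pc; rewrite ltn_neqAle invg_neq_adj.
split; first by apply: rt_trans le_u1u2; apply: rt_step.
by move=> u_u2; have := bruhat_le_len le_u1u2; case: lt_u_u1 => _ [_ [_]]; rewrite u_u2; lia.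
Qed.

End AdjacentTransposition.

Lemma exists_bruhat_gt n (w p u : {perm 'I_n}) :
  inversions u \subset inversions w -> inversions u^-1 \subset inversions p^-1 ->
  len (p * (u^-1 * w)) < len w + len (p * u^-1) ->
  exists u', [/\ bruhat_lt u u', inversions u' \subset inversions w
               & inversions u'^-1 \subset inversions p^-1].
Proof.
have [k] := ubnP (len w - len u); elim: k => // k IH in p u *.
move=> lt_k Lu Ru bad.
have /exists_adj_descent[c [c1 [c1E desc]]] : u^-1 * w != 1.
  apply: contraTneq bad => uw1; have -> : w = u by rewrite -(mulKVg u w) uw1 mulg1.
  move/leRP: Ru => [z [-> lenp]]; rewrite /pmul in lenp *.
  by rewrite mulVg mulg1 mulgK lenp ltnn.
rewrite !permM in desc; set s := tperm c c1.
have c_lt_c1 : c < c1 by rewrite c1E.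
have uc : u^-1 c < u^-1 c1.
  rewrite ltn_neqAle invg_neq_adj // leqNgt; apply/negP => u10.
  move/subset_inversionsP: Lu => /(_ _ _ u10); rewrite !permKV c1E ltnSn => /(_ isT).
  by rewrite ltnNge (ltnW desc).
have Lu1 : inversions (u * s) \subset inversions w by apply: sub_inversions_mulg_tperm.
have step : bruhat_step u (u * s) by apply: bruhat_step_mulg_tperm.
case: (ltnP (p^-1 c1) (p^-1 c)) => pc.
  exists (u * s); split; [exact: bruhat_step_lt | exact: Lu1 |].
  by rewrite invMg tpermV; apply: sub_inversions_tperm_mull.
have {}pc : p^-1 c < p^-1 c1 by rewrite ltn_neqAle invg_neq_adj.
have lt_k1 : len w - len (u * s) < k.
  by have := subset_leq_card Lu1; case: step => _ [_ [_]]; rewrite -!lenE; lia.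
have Ru1 : inversions (u * s)^-1 \subset inversions (p * s)^-1.
  by rewrite !invMg tpermV; apply: sub_inversions_tperm_mul2; rewrite ?uc ?pc.
have bad1 : len (p * s * ((u * s)^-1 * w)) < len w + len (p * s * (u * s)^-1).
  by rewrite invMg tpermV -!mulgA /s !tpermKg.
have [u2 [lt_u1u2 Lu2 Ru2]] := IH _ _ lt_k1 Lu1 Ru1 bad1.
exact: exists_bruhat_gt_tperm lt_u1u2 Lu2 Ru2.
Qed.

Unset Implicit Arguments.

Theorem lemma7p1 (n : nat) (w pi u : {perm 'I_n}) :
  leL u w -> leR u pi ->
  len (pmul w (pinv u)) + len u + len (pmul (pinv u) pi)
    > len (pmul (pmul w (pinv u)) pi) ->
  exists u' : {perm 'I_n}, bruhat_lt u u' /\ leL u' w /\ leR u' pi.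
Proof.
move=> Lu Ru bad.
have lenw : len (pmul w (pinv u)) + len u = len w.
  by case: Lu => z [wE lenE']; rewrite lenE' wE /pmul /pinv mulKg.
rewrite lenw /pmul /pinv in bad.
have [u' [lt_uu' Lu' Ru']] := exists_bruhat_gt (proj1 (leLP _ _) Lu) (proj1 (leRP _ _) Ru) bad.
by exists u'; split; [|split; [apply/leLP | apply/leRP]].
Qed.
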